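(* Fix a sequence of matchings $\mathcal{M}=\langle \mathbf{M}^{(1)}, \mathbf{M}^{(2)}, \ldots \rangle$ of a graph $G$ with $n$ nodes and consider the discrete protocol with these matchings. For any non-negative integers $K,\alpha,t$ with $1 \leq \alpha \leq K$, \[ \max_{ y \in \mathbb{Z}^n ,\ \operatorname{disc}(y) \leq K} \Pr\left[ x_{\max}^{(t)} \geq \lfloor \overline{x} \rfloor + \alpha \,\Big|\, x^{(0)} = y \right] \leq \max_{ y \in \mathbb{Z}^n,\ \operatorname{disc}(y) \leq K} \Pr\left[x_{\min}^{(t)} \leq \lfloor \overline{x} \rfloor - \alpha + 3 \,\Big|\, x^{(0)} = y \right], \] and similarly \[ \max_{ y \in \mathbb{Z}^n,\ \operatorname{disc}(y) \leq K} \Pr\left[ x_{\min}^{(t)} \leq \lfloor \overline{x} \rfloor - \alpha \,\Big|\, x^{(0)} = y \right] \leq \max_{ y \in \mathbb{Z}^n,\ \operatorname{disc}(y) \leq K} \Pr\left[x_{\max}^{(t)} \geq \lfloor \overline{x} \rfloor + \alpha - 3 \,\Big|\, x^{(0)} = y \right]. \]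
   Context: Discrete protocol with random orientation: $x^{(t)}\in\mathbb{Z}^n$ is the load vector at the end of round $t$; in round $t$, for each $\{u,v\}\in\mathbf{M}^{(t)}$ both $u,v$ get $\lfloor (x^{(t-1)}_u+x^{(t-1)}_v)/2\rfloor$ tokens and the excess token (if the sum is odd) goes to $u$ or $v$ with probability $1/2$ each, independently over edges and rounds; unmatched nodes keep their load. $\overline{x}=\frac1n\sum_w x^{(0)}_w$ is the average load (of the initial vector $y$), $x^{(t)}_{\max}=\max_u x^{(t)}_u$, $x^{(t)}_{\min}=\min_u x^{(t)}_u$, and $\operatorname{disc}(y)=\max_{u,v}|y_u-y_v|$. The probability is over the random orientations. *)

From mathcomp Require Import all_boot all_order all_algebra.
Set Implicit Arguments. Unset Strict Implicit. Unset Printing Implicit Defensive.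
Import Order.TTheory GRing.Theory Num.Theory.
Local Open Scope ring_scope.

Section Defs.
Variable n : nat.

Definition simple_graph (G : rel 'I_n) : Prop :=
  (forall u v, G u v = G v u) /\ (forall u, ~~ G u u).

(* A matching is encoded by its partner function: m u = u means u is
   unmatched, otherwise {u, m u} is an edge of the matching. *)
Definition is_matching (G : rel 'I_n) (m : 'I_n -> 'I_n) : Prop :=
  forall u, m (m u) = u /\ (m u != u -> G u (m u)).

(* One round of the discrete protocol with random orientation.
   c : 'I_n -> bool are the coins of the round; the coin of the edge {u,v}
   is the coin of its smaller endpoint min(u,v): if it is true the excess
   token goes to the smaller endpoint, otherwise to the larger one.
   Since distinct edges have distinct smaller endpoints, the edge coins are
   independent fair coins. *)
Definition step (m : 'I_n -> 'I_n) (c : 'I_n -> bool) (x : 'I_n -> int)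
  : 'I_n -> int := fun u =>
  let v := m u in
  if v == u then x u else
  let s := x u + x v in
  (s %/ 2)%Z + (if ((s %% 2)%Z == 1) && (if (u < v)%N then c u else ~~ c v)
                then 1 else 0).

Definition Omega (t : nat) := {ffun 'I_t * 'I_n -> bool}.

Definition coin (t : nat) (w : Omega t) (k : nat) (u : 'I_n) : bool :=
  if @insub nat (fun i => (i < t)%N) 'I_t k is Some i then w (i, u) else false.

(* load M t w y k = x^{(k)} for the run with initial vector y and coin
   outcome w; round k (k >= 1) uses the matching M k and the coins of
   index k-1. *)
Fixpoint load (M : nat -> 'I_n -> 'I_n) (t : nat) (w : Omega t)
  (y : 'I_n -> int) (k : nat) : 'I_n -> int :=
  match k with
  | 0 => y
  | k'.+1 => step (M k) (coin w k') (load M w y k')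
  end.

Definition Pr (t : nat) (E : pred (Omega t)) : rat :=
  #|[set w | E w]|%:R / #|[set: Omega t]|%:R.

Definition xmax (x : 'I_n -> int) : int :=
  if [pick u : 'I_n] is Some u0 then \big[Num.max/x u0]_u x u else 0.
Definition xmin (x : 'I_n -> int) : int :=
  if [pick u : 'I_n] is Some u0 then \big[Num.min/x u0]_u x u else 0.

Definition disc (y : 'I_n -> int) : nat :=
  (\max_(p : 'I_n * 'I_n) `|y p.1 - y p.2|%N)%N.

Definition floor_avg (y : 'I_n -> int) : int := ((\sum_u y u) %/ n%:Z)%Z.

End Defs.

(* Negating the initial vector and flipping every coin of the run negates
   every intermediate load vector: the rounding in [step] is floor on one
   side and ceiling on the other, and the flipped coins send the excess
   token the other way.  Hence x_max and x_min exchange roles under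
   [y |-> -y], disc is unchanged, and the floor of the average moves by at
   most one; since coin flipping is a bijection of the sample space, the
   events of the two sides are related with slack to spare (one unit of
   rounding is lost, three are allowed). *)

From mathcomp Require Import all_boot all_order all_algebra.
From mathcomp Require Import zify.
Import Order.TTheory GRing.Theory Num.Theory.
Set Implicit Arguments. Unset Strict Implicit.
Local Open Scope ring_scope.

Lemma divzN_bounds (m d : int) : 0 < d ->
  - (m %/ d)%Z - 1 <= ((- m) %/ d)%Z <= - (m %/ d)%Z.
Proof.
move=> d_gt0; have d_neq0 := lt0r_neq0 d_gt0.
have := divz_eq m d; have := divz_eq (- m) d.
have := ltz_pmod m d_gt0; have := ltz_pmod (- m) d_gt0.
have := modz_ge0 m d_neq0; have := modz_ge0 (- m) d_neq0.
move: (m %/ d)%Z ((- m) %/ d)%Z (m %% d)%Z ((- m) %% d)%Z d_gt0 => q q' r r'.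
nia.
Qed.

Lemma Pr_le_inj t n (E1 E2 : pred (Omega n t)) (f : Omega n t -> Omega n t) :
  injective f -> (forall w, E1 w -> E2 (f w)) -> Pr E1 <= Pr E2.
Proof.
move=> f_inj E12; rewrite /Pr ler_pM2r ?invr_gt0 ?ltr0n; last first.
  by apply/card_gt0P; exists [ffun=> false]; rewrite inE.
rewrite ler_nat -(card_preimset [set w | E2 w] f_inj).
by apply: subset_leq_card; apply/subsetP => w; rewrite !inE; apply: E12.
Qed.

Section Negation.
Variable n : nat.
Implicit Types (x y : 'I_n -> int) (m : 'I_n -> 'I_n).

Lemma eq_xmax x x' : x =1 x' -> xmax x = xmax x'.
Proof.
by move=> xx'; rewrite /xmax; case: pickP => // u0 _; rewrite xx'; apply: eq_bigr.
Qed.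

Lemma eq_xmin x x' : x =1 x' -> xmin x = xmin x'.
Proof.
by move=> xx'; rewrite /xmin; case: pickP => // u0 _; rewrite xx'; apply: eq_bigr.
Qed.

Lemma xmaxN x : xmax (fun u => - x u) = - xmin x.
Proof.
rewrite /xmax /xmin; case: pickP => // u0 _.
by rewrite (big_morph _ (@oppr_min _) (erefl _)).
Qed.

Lemma xminN x : xmin (fun u => - x u) = - xmax x.
Proof.
rewrite /xmax /xmin; case: pickP => // u0 _.
by rewrite (big_morph _ (@oppr_max _) (erefl _)).
Qed.

Lemma discN y : disc (fun u => - y u) = disc y.
Proof. by apply: eq_bigr => p _; rewrite -opprD abszN. Qed.

Lemma floor_avgN_bounds y : (0 < n)%N ->
  - floor_avg y - 1 <= floor_avg (fun u => - y u) <= - floor_avg y.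
Proof. by move=> n_gt0; rewrite /floor_avg sumrN divzN_bounds ?ltz_nat. Qed.

Lemma eq_step m c x x' : x =1 x' -> step m c x =1 step m c x'.
Proof. by move=> xx' u; rewrite /step !xx'. Qed.

Lemma stepN m c c' x : (forall u, c' u = ~~ c u) ->
  step m c' (fun u => - x u) =1 (fun u => - step m c x u).
Proof.
move=> c'E u; rewrite /step; case: eqP => // _; rewrite !c'E.
set b := if (u < m u)%N then c u else ~~ c (m u).
have -> : (if (u < m u)%N then ~~ c u else ~~ ~~ c (m u)) = ~~ b.
  by rewrite /b; case: ifP.
rewrite -opprD; move: (x u + x (m u)) => s.
have [odd_s|] := eqVneq (s %% 2)%Z 1; have [odd_Ns|] := eqVneq ((- s) %% 2)%Z 1;
  case: b => /=; lia.
Qed.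

Definition flip_coins t (w : Omega n t) : Omega n t := [ffun p => ~~ w p].

Lemma flip_coinsK t : involutive (@flip_coins t).
Proof. by move=> w; apply/ffunP => p; rewrite !ffunE negbK. Qed.

Lemma coin_flip_coins t (w : Omega n t) k u : (k < t)%N ->
  coin (flip_coins w) k u = ~~ coin w k u.
Proof. by move=> k_lt_t; rewrite /coin insubT ffunE. Qed.

Lemma load_flip_coinsN M t (w : Omega n t) y k : (k <= t)%N ->
  load M (flip_coins w) (fun u => - y u) k =1 (fun u => - load M w y k u).
Proof.
elim: k => [|k IHk] k_le_t u //=.
rewrite (eq_step _ _ (IHk (ltnW k_le_t))).
by apply: stepN => v; rewrite coin_flip_coins.
Qed.

End Negation.

Theorem lemma2p7 (n : nat) (G : rel 'I_n) (M : nat -> 'I_n -> 'I_n)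
  (K alpha t : nat) :
  (0 < n)%N -> simple_graph G -> (forall k, is_matching G (M k)) ->
  (1 <= alpha <= K)%N ->
  (forall y : 'I_n -> int, (disc y <= K)%N ->
     exists2 y' : 'I_n -> int, (disc y' <= K)%N &
       Pr (fun w : Omega n t => floor_avg y + alpha%:Z <= xmax (load M w y t))
       <= Pr (fun w : Omega n t =>
                xmin (load M w y' t) <= floor_avg y' - alpha%:Z + 3))
  /\
  (forall y : 'I_n -> int, (disc y <= K)%N ->
     exists2 y' : 'I_n -> int, (disc y' <= K)%N &
       Pr (fun w : Omega n t => xmin (load M w y t) <= floor_avg y - alpha%:Z)
       <= Pr (fun w : Omega n t =>
                floor_avg y' + alpha%:Z - 3 <= xmax (load M w y' t))).
Proof.
move=> n_gt0 _ _ _; split=> y disc_y; exists (fun u => - y u); rewrite ?discN //;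
  apply: (Pr_le_inj (can_inj (@flip_coinsK n t))) => w /=;
  have /andP[avg_lo avg_hi] := floor_avgN_bounds y n_gt0;
  have loadN := load_flip_coinsN M w y (leqnn t).
- by rewrite (eq_xmin loadN) xminN; lia.
- by rewrite (eq_xmax loadN) xmaxN; lia.
Qed.
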